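(* For every finite multiset $\Gamma$ of ILL formulae and ILL formula $\varphi$: the sequent $(\Gamma:\varphi)$ is valid if and only if $\Gamma\Vdash^{\varnothing}_{\varnothing}\varphi$, where the subscript $\varnothing$ is the empty base.
   Context: Fix a set $\mathbb{A}$ of propositional atoms. ILL formulae: $\phi ::= p\in\mathbb{A} \mid \top \mid 0 \mid 1 \mid \phi\multimap\phi \mid \phi\otimes\phi \mid \phi\,\&\,\phi \mid \phi\oplus\phi \mid\ !\phi$. All multisets are finite; ''$\Gamma,\Delta$'' denotes multiset union. Atomic rules and bases: an atomic sequent is $P\Rightarrow p$ with $P$ a multiset of atoms, $p$ an atom. An atomic box is a multiset of atomic sequents. An atomic rule is a triple $\langle\mathbf{A},\mathbf{S},p\rangle$ with $\mathbf{A}$ a multiset of atomic boxes, $\mathbf{S}$ an atomic box, $p$ an atom. A base is a set of atomic rules. An atom $p$ is persistent in $\mathcal{B}$ if some $\langle\varnothing,\mathbf{S},p\rangle\in\mathcal{B}$ has $\mathbf{S}\neq\varnothing$. Derivability $\vdash_{\mathcal{B}}$: (Ref) $p\vdash_{\mathcal{B}}p$; (App) if $\langle\mathbf{A},\mathbf{S},p\rangle\in\mathcal{B}$ with $\mathbf{A}=\{\mathbf{T}_1,\dots,\mathbf{T}_m\}$, and there are atomic multisets $C_1,\dots,C_n$ ($n\ge m$) and a multiset $D=\{d_{m+1},\dots,d_n\}$ of atoms persistent in $\mathcal{B}$ such that $C_i,Q\vdash_{\mathcal{B}}q$ for every $i\le m$ and every $Q\Rightarrow q\in\mathbf{T}_i$,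 $C_j\vdash_{\mathcal{B}}d_j$ for every $m<j\le n$, and $D,U\vdash_{\mathcal{B}}v$ for every $U\Rightarrow v\in\mathbf{S}$, then $C_1,\dots,C_n\vdash_{\mathcal{B}}p$. Support $\Vdash^L_{\mathcal{B}}$ (base $\mathcal{B}$, atomic multiset $L$), by induction on formulae: $\Vdash^L_{\mathcal{B}}p$ iff $L\vdash_{\mathcal{B}}p$; $\Vdash^L_{\mathcal{B}}\varphi\multimap\psi$ iff $\varphi\Vdash^L_{\mathcal{B}}\psi$; $\Vdash^L_{\mathcal{B}}\varphi\otimes\psi$ iff for all $\mathcal{C}\supseteq\mathcal{B}$, atomic $K$, atoms $p$: if $\varphi,\psi\Vdash^K_{\mathcal{C}}p$ then $\Vdash^{L,K}_{\mathcal{C}}p$; $\Vdash^L_{\mathcal{B}}1$ iff for all $\mathcal{C}\supseteq\mathcal{B}$, $K$, $p$: if $\Vdash^K_{\mathcal{C}}p$ then $\Vdash^{L,K}_{\mathcal{C}}p$; $\Vdash^L_{\mathcal{B}}\varphi\&\psi$ iff $\Vdash^L_{\mathcal{B}}\varphi$ and $\Vdash^L_{\mathcal{B}}\psi$; $\Vdash^L_{\mathcal{B}}\varphi\oplus\psi$ iff for all $\mathcal{C}\supseteq\mathcal{B}$, $K$, $p$: if $\varphi\Vdash^K_{\mathcal{C}}p$ and $\psi\Vdash^K_{\mathcal{C}}p$ then $\Vdash^{L,K}_{\mathcal{C}}p$; $\Vdash^L_{\mathcal{B}}0$ iff $\Vdash^{L,K}_{\mathcal{B}}p$ for all atoms $p$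 and atomic $K$; $\Vdash^L_{\mathcal{B}}\top$ always; $\Vdash^L_{\mathcal{B}}!\varphi$ iff for all $\mathcal{C}\supseteq\mathcal{B}$, $K$, $p$: if (for all $\mathcal{D}\supseteq\mathcal{C}$, $\Vdash^{\varnothing}_{\mathcal{D}}\varphi$ implies $\Vdash^K_{\mathcal{D}}p$) then $\Vdash^{L,K}_{\mathcal{C}}p$. For nonempty multisets: $\Vdash^L_{\mathcal{B}}\Gamma,\Delta$ iff $L=K,M$ with $\Vdash^K_{\mathcal{B}}\Gamma$ and $\Vdash^M_{\mathcal{B}}\Delta$. For a nonempty antecedent written $!\Delta,\Theta$, where $!\Delta$ collects the formulae with top-level connective $!$ (with $\Delta$ the formulae under those $!$) and $\Theta$ contains none: $!\Delta,\Theta\Vdash^L_{\mathcal{B}}\varphi$ iff for all $\mathcal{C}\supseteq\mathcal{B}$ and atomic $K$, if $\Vdash^{\varnothing}_{\mathcal{C}}\delta$ for every $\delta\in\Delta$ and $\Vdash^K_{\mathcal{C}}\Theta$ then $\Vdash^{L,K}_{\mathcal{C}}\varphi$ (when $\Theta$ is empty, $K$ is empty). An empty antecedent: $\varnothing\Vdash^L_{\mathcal{B}}\varphi$ means $\Vdash^L_{\mathcal{B}}\varphi$. A sequent $(\Gamma:\varphi)$ is valid iff $\Gamma\Vdash^{\varnothing}_{\mathcal{B}}\varphi$ for all bases $\mathcal{B}$. *)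

From Stdlib Require List.
From mathcomp Require Import all_boot.
Set Implicit Arguments.
Unset Strict Implicit.
Unset Printing Implicit Defensive.

(* Multisets are represented by sequences; multiset union is ++ (taken
   up to permutation where the paper writes "L = K,M"). *)

Inductive form (A : Type) : Type :=
| Atom of A
| Top
| Zero
| One
| Lolli of form A & form A
| Tensor of form A & form A
| With of form A & form A
| Plus of form A & form A
| Bang of form A.
Arguments Top {A}. Arguments Zero {A}. Arguments One {A}.

(** Atomic sequent P => p is a pair (P, p); an atomic box is a seq of them.
    An atomic rule <As, S, p>. *)
Record rule (A : Type) := Rule {
  r_prem : seq (seq (seq A * A));
  r_disch : seq (seq A * A);
  r_concl : A }.

Definition base (A : Type) := rule A -> Prop.
Definition empty_base (A : Type) : base A := fun _ => False.

Definition ext (A : Type) (B C : base A) : Prop := forall r, B r -> C r.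

Definition persistent (A : Type) (B : base A) (d : A) : Prop :=
  exists S, S <> [::] /\ B (Rule [::] S d).

Inductive deriv (A : eqType) (B : base A) : seq A -> A -> Prop :=
| der_ref (p : A) : deriv B [:: p] p
| der_app (As : seq (seq (seq A * A))) (S : seq (seq A * A)) (p : A)
    (Cs1 Cs2 : seq (seq A)) (D : seq A) (L : seq A) :
    B (Rule As S p) ->
    (* C_1..C_m, one for each box T_i of As *)
    size Cs1 = size As ->
    (forall T C, (T, C) \in zip As Cs1 ->
       forall Q q, (Q, q) \in T -> deriv B (C ++ Q) q) ->
    (* C_{m+1}..C_n together with d_{m+1}..d_n *)
    size Cs2 = size D ->
    (forall d, d \in D -> persistent B d) ->
    (forall C d, (C, d) \in zip Cs2 D -> deriv B C d) ->
    (forall U v, (U, v) \in S -> deriv B (D ++ U) v) ->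
    perm_eq L (flatten (Cs1 ++ Cs2)) ->
    deriv B L p.

(** Support of a multiset Θ (of non-! formulae), given as the list of their
    support predicates:  ⊩^K_C Θ  iff K = K_1,...,K_k with ⊩^{K_i}_C θ_i.
    For the empty Θ this forces K to be empty. *)
Fixpoint msupp (A : eqType) (ps : seq (base A -> seq A -> Prop))
    (C : base A) (K : seq A) : Prop :=
  match ps with
  | [::] => K = [::]
  | p :: ps' => exists K1 K2, perm_eq K (K1 ++ K2) /\ p C K1 /\ msupp ps' C K2
  end.

(** An antecedent item: (true, support of δ) for a formula !δ,
    (false, support of θ) for a formula θ without top-level !. *)
Definition item (A : eqType) := (bool * (base A -> seq A -> Prop))%type.

Definition asupp (A : eqType) (its : seq (item A)) (B : base A) (L : seq A)
    (goal : base A -> seq A -> Prop) : Prop :=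
  forall C K, ext B C ->
    (forall it, Stdlib.Lists.List.In it its -> it.1 -> it.2 C [::]) ->
    msupp [seq it.2 | it <- its & ~~ it.1] C K ->
    goal C (L ++ K).

Fixpoint supp (A : eqType) (f : form A) (B : base A) (L : seq A) {struct f} : Prop :=
  match f with
  | Atom p => deriv B L p
  | Lolli phi psi =>
      asupp [:: match phi with Bang d => (true, supp d) | _ => (false, supp phi) end]
            B L (supp psi)
  | Tensor phi psi =>
      forall C K p, ext B C ->
        asupp [:: match phi with Bang d => (true, supp d) | _ => (false, supp phi) end;
                  match psi with Bang d => (true, supp d) | _ => (false, supp psi) end]
              C K (fun D M => deriv D M p) ->
        deriv C (L ++ K) p
  | One =>
      forall C K p, ext B C -> deriv C K p -> deriv C (L ++ K) p
  | With phi psi => supp phi B L /\ supp psi B L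
  | Plus phi psi =>
      forall C K p, ext B C ->
        asupp [:: match phi with Bang d => (true, supp d) | _ => (false, supp phi) end]
              C K (fun D M => deriv D M p) ->
        asupp [:: match psi with Bang d => (true, supp d) | _ => (false, supp psi) end]
              C K (fun D M => deriv D M p) ->
        deriv C (L ++ K) p
  | Zero => forall p K, deriv B (L ++ K) p
  | Top => True
  | Bang phi =>
      forall C K p, ext B C ->
        (forall D, ext C D -> supp phi D [::] -> deriv D K p) ->
        deriv C (L ++ K) p
  end.

Definition item_of (A : eqType) (f : form A) : item A :=
  match f with Bang d => (true, supp d) | _ => (false, supp f) end.

Definition supp_seq (A : eqType) (Gamma : seq (form A)) (B : base A) (L : seq A)
    (phi : form A) : Prop :=
  match Gamma with
  | [::] => supp phi B L
  | _ => asupp (map (@item_of A) Gamma) B L (supp phi)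
  end.

Definition valid (A : eqType) (Gamma : seq (form A)) (phi : form A) : Prop :=
  forall B : base A, supp_seq Gamma B [::] phi.

From mathcomp Require Import all_boot.

(* Support is monotone along base extension: derivability only gains rules in
   a larger base, and every non-atomic clause already quantifies over all
   extensions of the base.  Since every base extends the empty one, support in
   the empty base is support in all bases. *)

Set Implicit Arguments.
Unset Strict Implicit.
Unset Printing Implicit Defensive.

Section Monotonicity.

Variable A : eqType.
Implicit Types (B C D : base A) (L : seq A).

Lemma ext_trans B C D : ext B C -> ext C D -> ext B D.
Proof. by move=> hBC hCD r /hBC /hCD. Qed.

Lemma empty_base_ext B : ext (@empty_base A) B.
Proof. by []. Qed.

Lemma deriv_ext B C L p : ext B C -> deriv B L p -> deriv C L p.
Proof.
move=> hBC; elim=> {L p} [p | As S p Cs1 Cs2 D L hr hs1 _ IH1 hs2 hD _ IH2 _ IH3 hperm].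
  exact: der_ref.
apply: (der_app (hBC _ hr)) IH1 hs2 _ IH2 IH3 hperm => // d /hD [S' [hS' hd]].
by exists S'; split; last exact: hBC.
Qed.

Lemma asupp_ext (its : seq (item A)) B C L (goal : base A -> seq A -> Prop) :
  ext B C -> asupp its B L goal -> asupp its C L goal.
Proof. by move=> hBC h D K hCD; apply: h; apply: ext_trans hCD. Qed.

Lemma supp_ext (f : form A) B C L : ext B C -> supp f B L -> supp f C L.
Proof.
elim: f B C L => [p | | | | f1 _ f2 _ | f1 _ f2 _ | f1 IH1 f2 IH2 | f1 _ f2 _ | f _]
  B C L hBC /=.
- exact: deriv_ext.
- by [].
- by move=> h p K; apply: deriv_ext (h p K).
- by move=> h D K p hCD; apply: h; apply: ext_trans hCD.
- exact: asupp_ext.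
- by move=> h D K p hCD; apply: h; apply: ext_trans hCD.
- by case=> h1 h2; split; [apply: IH1 h1 | apply: IH2 h2].
- by move=> h D K p hCD; apply: h; apply: ext_trans hCD.
- by move=> h D K p hCD; apply: h; apply: ext_trans hCD.
Qed.

Lemma supp_seq_ext (Gamma : seq (form A)) B C L (phi : form A) :
  ext B C -> supp_seq Gamma B L phi -> supp_seq Gamma C L phi.
Proof. by case: Gamma => [|g Gs]; [apply: supp_ext | apply: asupp_ext]. Qed.

End Monotonicity.

Theorem lemma4 (A : eqType) (Gamma : seq (form A)) (phi : form A) :
  valid Gamma phi <-> supp_seq Gamma (@empty_base A) [::] phi.
Proof.
split=> [valid_phi | supp_empty B]; first exact: valid_phi.
exact: supp_seq_ext (empty_base_ext B) supp_empty.
Qed.
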